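(* Let $\{W_n\}_{n\ge0}$ be a monic polynomial sequence and write, for $n\ge0$, $$W_{3n}(x)=P_n(x^3)+xa^1_{n-1}(x^3)+x^2a^2_{n-1}(x^3),$$ $$W_{3n+1}(x)=b^1_n(x^3)+xQ_n(x^3)+x^2b^2_{n-1}(x^3),$$ $$W_{3n+2}(x)=c^1_n(x^3)+xc^2_n(x^3)+x^2R_n(x^3),$$ with the component polynomials as described in the context. Then $\{W_n\}$ is an Appell sequence (i.e. $W_n'(x)=nW_{n-1}(x)$ for $n\ge1$) if and only if, for all $n\ge0$: $(I+3xD)Q_n=(3n+1)P_n$, $(2I+3xD)b^2_{n-1}=(3n+1)a^1_{n-1}$, $3Db^1_n=(3n+1)a^2_{n-1}$, $(I+3xD)c^2_n=(3n+2)b^1_n$, $(2I+3xD)R_n=(3n+2)Q_n$, $3Dc^1_n=(3n+2)b^2_{n-1}$, $(I+3xD)a^1_n=(3n+3)c^1_n$, $(2I+3xD)a^2_n=(3n+3)c^2_n$, $3DP_{n+1}=(3n+3)R_n$.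
   Context: $\mathcal{P}$ is the space of complex polynomials; $I$ is the identity, $D$ the derivative, $x$ multiplication by $x$. A monic polynomial sequence (MPS) is a sequence $\{W_n\}_{n\ge0}$ with $W_n$ monic of degree $n$. Cubic decomposition (CD): for any MPS $\{W_n\}$ there are unique polynomials such that the three displayed identities hold, where $\{P_n\},\{Q_n\},\{R_n\}$ are MPSs (principal components) and the secondary components satisfy $\deg a^1_{n-1}\le n-1$, $\deg a^2_{n-1}\le n-1$, $\deg b^1_n\le n$, $\deg b^2_{n-1}\le n-1$, $\deg c^1_n\le n$, $\deg c^2_n\le n$, with $a^1_{-1}=a^2_{-1}=b^2_{-1}=0$. An MPS $\{W_n\}$ is Appell if $DW_{n+1}=(n+1)W_n$ for all $n\ge0$. *)

From HB Require Import structures.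
From mathcomp Require Import all_boot all_order all_algebra.
From mathcomp Require Import reals complex.
Set Implicit Arguments. Unset Strict Implicit. Unset Printing Implicit Defensive.
Import GRing.Theory Num.Theory.
Local Open Scope ring_scope.

(* shifted index: [pre f n] stands for f_{n-1}, with f_{-1} = 0 *)
Definition pre (K : nzRingType) (f : nat -> {poly K}) (n : nat) : {poly K} :=
  if n is n'.+1 then f n' else 0.

Definition MPS (K : nzRingType) (W : nat -> {poly K}) : Prop :=
  forall n, W n \is monic /\ size (W n) = n.+1.

Definition Appell (K : nzRingType) (W : nat -> {poly K}) : Prop :=
  forall n, (W n.+1)^`() = (n.+1)%:R *: W n.

(* The cubic decomposition of W with components P Q R (principal) and
   a1 a2 b1 b2 c1 c2 (secondary), where a1 n, a2 n, b2 n stand for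
   a^1_n, a^2_n, b^2_n (n >= 0), the index -1 value being 0 (see [pre]). *)
Definition cube_comp (K : nzRingType) (p : {poly K}) : {poly K} :=
  comp_poly ('X^3) p.

Definition cubic_decomposition (K : nzRingType) (W P Q R a1 a2 b1 b2 c1 c2 : nat -> {poly K}) : Prop :=
  [/\ [/\ MPS P, MPS Q & MPS R],
      (forall n, [/\ (size (a1 n) <= n.+1)%N, (size (a2 n) <= n.+1)%N & (size (b2 n) <= n.+1)%N]),
      (forall n, [/\ (size (b1 n) <= n.+1)%N, (size (c1 n) <= n.+1)%N & (size (c2 n) <= n.+1)%N]) &
      (forall n,
        [/\ W (3 * n)%N = cube_comp (P n) + 'X * cube_comp (pre a1 n) + 'X^2 * cube_comp (pre a2 n),
            W (3 * n).+1 = cube_comp (b1 n) + 'X * cube_comp (Q n) + 'X^2 * cube_comp (pre b2 n) &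
            W (3 * n).+2 = cube_comp (c1 n) + 'X * cube_comp (c2 n) + 'X^2 * cube_comp (R n)])].

From HB Require Import structures.
From mathcomp Require Import all_boot all_order all_algebra.
From mathcomp Require Import reals complex.
From mathcomp Require Import ring zify.
Import GRing.Theory Num.Theory.
Local Open Scope ring_scope.

(* For a polynomial f, D (x^k f(x^3)) is x^(k-1) ((kI + 3xD) f)(x^3) when k = 1, 2 and
   x^2 (3Df)(x^3) when k = 0: differentiation shifts each residue class of exponents
   mod 3 down by one.  By uniqueness of the cubic decomposition, W'_(m+1) = (m+1) W_m
   therefore splits into three identities between components, which for m = 3n, 3n+1,
   3n+2 are exactly the three triples of the statement. *)

Section CubicSum.
Variable K : comNzRingType.
Implicit Types p q r : {poly K}.

Definition cubic_sum p q r : {poly K} :=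
  cube_comp p + 'X * cube_comp q + 'X^2 * cube_comp r.

Lemma coef_cube_comp p i :
  (cube_comp p)`_i = if (3 %| i)%N then p`_(i %/ 3) else 0.
Proof. exact: coef_comp_poly_Xn. Qed.

Lemma coef_Xn_cube_comp k j p i : (k < 3)%N -> (j < 3)%N ->
  ('X^k * cube_comp p)`_(3 * i + j)%N = if k == j then p`_i else 0.
Proof.
move=> k_lt3 j_lt3; rewrite coefXnM coef_cube_comp.
have [lt_ijk | le_kij] := ltnP (3 * i + j) k.
  by have /negPf -> : k != j by lia.
have [<- | ne_kj] := eqVneq k j.
  by rewrite addnK dvdn_mulr // mulKn.
suff /negPf -> : ~~ (3 %| 3 * i + j - k)%N by [].
apply/negP => /dvdnP [d]; lia.
Qed.

Lemma coef_cubic_sum p q r i :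
  [/\ (cubic_sum p q r)`_(3 * i)%N = p`_i,
      (cubic_sum p q r)`_(3 * i + 1)%N = q`_i &
      (cubic_sum p q r)`_(3 * i + 2)%N = r`_i].
Proof.
have coefE j : (j < 3)%N -> (cubic_sum p q r)`_(3 * i + j)%N =
    (if j == 0%N then p`_i else 0) + (if j == 1%N then q`_i else 0) +
    (if j == 2%N then r`_i else 0).
  move=> j_lt3.
  have -> : cubic_sum p q r =
      'X^0 * cube_comp p + 'X^1 * cube_comp q + 'X^2 * cube_comp r.
    by rewrite expr0 mul1r expr1.
  by rewrite !coefD !coef_Xn_cube_comp // !(eq_sym _ j).
by split; [rewrite -[(3 * i)%N]addn0 | |]; rewrite coefE //= !(addr0, add0r).
Qed.

Lemma cubic_sum_inj p q r p' q' r' :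
  cubic_sum p q r = cubic_sum p' q' r' -> [/\ p = p', q = q' & r = r'].
Proof.
move=> eq_sum; split; apply/polyP => i;
  have [p_i q_i r_i] := coef_cubic_sum p q r i;
  have [p'_i q'_i r'_i] := coef_cubic_sum p' q' r' i.
- by rewrite -p_i -p'_i eq_sum.
- by rewrite -q_i -q'_i eq_sum.
- by rewrite -r_i -r'_i eq_sum.
Qed.

Lemma scale_cubic_sum (c : K) p q r :
  c *: cubic_sum p q r = cubic_sum (c *: p) (c *: q) (c *: r).
Proof.
by rewrite /cubic_sum /cube_comp !comp_polyZ !scalerDr -!scalerAr.
Qed.

Lemma deriv_cube_comp p : (cube_comp p)^`() = cube_comp p^`() * (3%:R * 'X^2).
Proof. by rewrite /cube_comp deriv_comp derivXn -mulr_natl. Qed.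

Lemma deriv_cubic_sum p q r : (cubic_sum p q r)^`() =
  cubic_sum (q + 3%:R *: ('X * q^`())) (2%:R *: r + 3%:R *: ('X * r^`()))
            (3%:R *: p^`()).
Proof.
rewrite /cubic_sum !derivD !derivM !deriv_cube_comp derivX.
rewrite /cube_comp !comp_polyD !comp_polyZ !comp_polyM !comp_polyX.
rewrite -!mul_polyC !polyC_natr.
ring.
Qed.

Lemma deriv_cubic_sum_eqZ (c : K) p q r p' q' r' :
  (cubic_sum p q r)^`() = c *: cubic_sum p' q' r' <->
  [/\ q + 3%:R *: ('X * q^`()) = c *: p',
      2%:R *: r + 3%:R *: ('X * r^`()) = c *: q' &
      3%:R *: p^`() = c *: r'].
Proof.
rewrite deriv_cubic_sum scale_cubic_sum; split; first exact: cubic_sum_inj.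
by case=> -> -> ->.
Qed.

End CubicSum.

Lemma forall_nat_mod3 (A B : nat -> Prop) :
  (forall n, [/\ A (3 * n)%N, A (3 * n).+1 & A (3 * n).+2] <-> B n) ->
  (forall m, A m) <-> (forall n, B n).
Proof.
move=> AB; split=> [A_all n | B_all m]; first by apply/AB.
have [n [-> | [-> | ->]]] : exists n, m = (3 * n)%N \/ m = (3 * n).+1 \/ m = (3 * n).+2.
  by exists (m %/ 3)%N; lia.
all: by case/AB: (B_all n).
Qed.

Lemma and3_iff (A0 A1 A2 B0 B1 B2 : Prop) :
  A0 <-> B0 -> A1 <-> B1 -> A2 <-> B2 -> [/\ A0, A1 & A2] <-> [/\ B0, B1 & B2].
Proof. by move=> [? ?] [? ?] [? ?]; split=> -[*]; split; auto. Qed.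

Local Open Scope complex_scope.

Theorem proposition6 (R : realType) (W P Q Rc a1 a2 b1 b2 c1 c2 : nat -> {poly R[i]}) :
  MPS W ->
  cubic_decomposition W P Q Rc a1 a2 b1 b2 c1 c2 ->
  Appell W <->
  (forall n : nat,
    [/\ [/\ Q n + 3%:R *: ('X * (Q n)^`()) = (3 * n + 1)%N%:R *: P n,
        2%:R *: pre b2 n + 3%:R *: ('X * (pre b2 n)^`()) = (3 * n + 1)%N%:R *: pre a1 n &
        3%:R *: (b1 n)^`() = (3 * n + 1)%N%:R *: pre a2 n],
        [/\ c2 n + 3%:R *: ('X * (c2 n)^`()) = (3 * n + 2)%N%:R *: b1 n,
        2%:R *: Rc n + 3%:R *: ('X * (Rc n)^`()) = (3 * n + 2)%N%:R *: Q n &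
        3%:R *: (c1 n)^`() = (3 * n + 2)%N%:R *: pre b2 n] &
        [/\ a1 n + 3%:R *: ('X * (a1 n)^`()) = (3 * n + 3)%N%:R *: c1 n,
        2%:R *: a2 n + 3%:R *: ('X * (a2 n)^`()) = (3 * n + 3)%N%:R *: c2 n &
        3%:R *: (P n.+1)^`() = (3 * n + 3)%N%:R *: Rc n]]).
Proof.
move=> _ [_ _ _ W_dec]; apply: forall_nat_mod3 => n.
have [W0 W1 W2] := W_dec n; have [W3 _ _] := W_dec n.+1.
have -> : (3 * n).+3 = (3 * n.+1)%N by lia.
apply: and3_iff.
- by rewrite W0 W1 -[(3 * n).+1]addn1; exact: deriv_cubic_sum_eqZ.
- by rewrite W1 W2 -[(3 * n).+2]addn2; exact: deriv_cubic_sum_eqZ.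
- by rewrite W2 W3 [(3 * n.+1)%N]mulnSr; exact: deriv_cubic_sum_eqZ.
Qed.
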